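(* Let $N\ge 2$ and $0<\gamma_1\le\gamma_2\le\dots\le\gamma_N$. Among the spanning trees $T$ on $\{1,\dots,N\}$ that maximize $\rho(T)$, there is one in which vertex $1$ has exactly one neighbor, namely vertex $2$.
   Context: For distinct $i,j$ put $\varphi(i,j)=\log_2\!\big(\gamma_i+\frac{\gamma_i}{\gamma_i+\gamma_j}\big)$. For a spanning tree $T$ on $\{1,\dots,N\}$ define $\rho(T)=\min\{\varphi(i,j): \{i,j\}\in E(T),\ \gamma_i\le\gamma_j\}$ (equivalently the minimum of $\varphi(i,j)$ over all ordered pairs $(i,j)$ with $\{i,j\}\in E(T)$). *)

From mathcomp Require Import all_boot.
From Stdlib Require Import Reals.
Set Implicit Arguments. Unset Strict Implicit. Unset Printing Implicit Defensive.

(* Vertices {1,...,N} are represented by 'I_N (vertex k+1 <-> ordinal k). *)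

Definition log2 (x : R) : R := (ln x / ln 2)%R.

Definition phi {N : nat} (gamma : 'I_N -> R) (i j : 'I_N) : R :=
  log2 (gamma i + gamma i / (gamma i + gamma j))%R.

Definition adj {N : nat} (T : {set {set 'I_N}}) : rel 'I_N :=
  fun u v => [set u; v] \in T.

Definition connectedb {N : nat} (T : {set {set 'I_N}}) : bool :=
  [forall u, forall v, connect (adj T) u v].

(* Spanning tree: simple edges, connected, and minimally connected
   (deleting any edge disconnects the graph), i.e. connected and acyclic. *)
Definition spanning_tree {N : nat} (T : {set {set 'I_N}}) : Prop :=
  (forall e, e \in T -> #|e| = 2) /\
  connectedb T /\
  (forall e, e \in T -> ~~ connectedb (T :\ e)).

Definition edge_values {N : nat} (gamma : 'I_N -> R) (T : {set {set 'I_N}}) : seq R :=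
  [seq phi gamma p.1 p.2 | p <- enum [pred p : 'I_N * 'I_N | (p.1 != p.2) && ([set p.1; p.2] \in T)]].

Definition rho {N : nat} (gamma : 'I_N -> R) (T : {set {set 'I_N}}) : R :=
  let s := edge_values gamma T in foldr Rmin (head 0%R s) s.

(* Take a tree T maximizing rho, redirect each of its edges at vertex 1 to
   vertex 2, and add the edge {1,2}.  Since phi(i,j) increases with gamma_i and
   decreases with gamma_j, and gamma_1 <= gamma_2 <= gamma_k for all k, every
   ordered edge of the new graph has phi at least that of some ordered edge of
   T, so its rho is at least rho(T).  The new graph is still connected and 1 is
   adjacent only to 2, so any spanning subtree of it is optimal as well (rho can
   only grow on passing to a subgraph) and has vertex 1 as a leaf at 2. *)
From mathcomp Require Import all_boot.
From Stdlib Require Import Reals.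
From Stdlib Require Import Lra Classical.

Set Implicit Arguments.
Unset Strict Implicit.
Unset Printing Implicit Defensive.

Section RealFacts.
Local Open Scope R_scope.

Lemma log2_le x y : 0 < x -> x <= y -> log2 x <= log2 y.
Proof.
move=> x_gt0 le_xy; rewrite /log2 /Rdiv; apply: Rmult_le_compat_r.
- by apply/Rlt_le/Rinv_0_lt_compat; rewrite -ln_1; apply: ln_increasing; lra.
- case: le_xy => [lt_xy | ->]; last exact: Rle_refl.
  by apply/Rlt_le/ln_increasing.
Qed.

Lemma phi_le N (gamma : 'I_N -> R) (gamma_gt0 : forall i, 0 < gamma i) i j k l :
  gamma i <= gamma k -> gamma l <= gamma j -> phi gamma i j <= phi gamma k l.
Proof.
move=> le_ik le_lj; have gi := gamma_gt0 i; have gj := gamma_gt0 j; have gl := gamma_gt0 l.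
rewrite /phi; apply: log2_le.
  by have := Rdiv_lt_0_compat (gamma i) (gamma i + gamma j); lra.
suff : gamma i / (gamma i + gamma j) <= gamma k / (gamma k + gamma l) by lra.
apply: (Rmult_le_reg_r ((gamma i + gamma j) * (gamma k + gamma l))); first nra.
have -> : gamma i / (gamma i + gamma j) * ((gamma i + gamma j) * (gamma k + gamma l))
  = gamma i * (gamma k + gamma l) by field; lra.
have -> : gamma k / (gamma k + gamma l) * ((gamma i + gamma j) * (gamma k + gamma l))
  = gamma k * (gamma i + gamma j) by field; lra.
nra.
Qed.

Lemma foldr_Rmin_le (X : eqType) (f : X -> R) (l : seq X) d x :
  x \in l -> foldr Rmin d (map f l) <= f x.
Proof.
elim: l => [|a l IHl] //=; rewrite in_cons => /orP [/eqP -> | x_l].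
- exact: Rmin_l.
- exact: Rle_trans (Rmin_r _ _) (IHl x_l).
Qed.

Lemma foldr_Rmin_ge (X : eqType) (f : X -> R) (l : seq X) d c :
  c <= d -> (forall x, x \in l -> c <= f x) -> c <= foldr Rmin d (map f l).
Proof.
elim: l => [|a l IHl] //= le_cd lb.
apply: Rmin_glb; first by apply: lb; rewrite mem_head.
by apply: IHl => // x x_l; apply: lb; rewrite in_cons x_l orbT.
Qed.

Lemma exists_maximizer (T : finType) (P : T -> Prop) (f : T -> R) :
  (exists x, P x) -> exists x, P x /\ forall y, P y -> f y <= f x.
Proof.
suff max_in (s : seq T) : (exists x, x \in s /\ P x) ->
    exists x, P x /\ forall y, y \in s -> P y -> f y <= f x.
  move=> [x Px]; have [|m [Pm m_max]] := max_in (enum T); first by exists x; rewrite mem_enum.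
  by exists m; split=> // y; apply: m_max; rewrite mem_enum.
elim: s => [|a s IHs] [x [x_s Px]]; first by rewrite in_nil in x_s.
have [[m [Pm m_max]] | no_P] := classic (exists m, P m /\ forall y, y \in s -> P y -> f y <= f m).
- have [[Pa le_ma] | keep_m] := classic (P a /\ f m <= f a).
  + exists a; split=> // y; rewrite in_cons => /orP [/eqP -> _ | y_s Py]; first exact: Rle_refl.
    exact: Rle_trans (m_max y y_s Py) le_ma.
  + exists m; split=> // y; rewrite in_cons => /orP [/eqP -> Pa | y_s]; last exact: m_max.
    by apply: Rlt_le; apply: Rnot_le_lt => le_ma; apply: keep_m.
- have no_P_s : forall y, y \in s -> ~ P y by move=> y y_s Py; apply: no_P; apply: IHs; exists y.
  have Pa : P a by move: x_s; rewrite in_cons => /orP [/eqP <- // | /no_P_s].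
  exists a; split=> // y; rewrite in_cons => /orP [/eqP -> _ | /no_P_s //]; exact: Rle_refl.
Qed.

End RealFacts.

Section Rho.
Variables (N : nat) (gamma : 'I_N -> R).

Lemma rho_le_phi (G : {set {set 'I_N}}) i j :
  i != j -> [set i; j] \in G -> (rho gamma G <= phi gamma i j)%R.
Proof.
move=> ij ij_G; apply: (@foldr_Rmin_le _ (fun p : 'I_N * 'I_N => phi gamma p.1 p.2) _ _ (i, j)).
by rewrite mem_enum inE /= ij ij_G.
Qed.

Lemma rho_ge (G : {set {set 'I_N}}) i0 j0 (c : R) :
  i0 != j0 -> [set i0; j0] \in G ->
  (forall i j, i != j -> [set i; j] \in G -> (c <= phi gamma i j)%R) -> (c <= rho gamma G)%R.
Proof.
move=> ij0 ij0_G lb; rewrite /rho /edge_values; set E := enum _.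
have lb_E p : p \in E -> (c <= phi gamma p.1 p.2)%R.
  by rewrite mem_enum => /andP [] /lb; apply.
have : (i0, j0) \in E by rewrite mem_enum inE /= ij0 ij0_G.
case: E lb_E => [// | p l] lb_E _.
by apply: foldr_Rmin_ge => [|q /lb_E //]; apply: lb_E; exact: mem_head.
Qed.

Lemma rho_subset (G H : {set {set 'I_N}}) i j :
  G \subset H -> i != j -> [set i; j] \in G -> (rho gamma H <= rho gamma G)%R.
Proof.
move=> GH ij ij_G; apply: (rho_ge ij ij_G) => k l kl kl_G.
exact: rho_le_phi kl (subsetP GH _ kl_G).
Qed.

End Rho.

Section Graphs.
Variable N : nat.
Implicit Types (G T : {set {set 'I_N}}) (x y : 'I_N).

Definition simple_graph G := forall e, e \in G -> #|e| = 2.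

Lemma simple_edge_neq G x y : simple_graph G -> [set x; y] \in G -> x != y.
Proof. by move=> simG /simG; rewrite cards2; case: (x != y). Qed.

Lemma set2_eq_cases (T : finType) (x y u v : T) : x != y -> [set x; y] = [set u; v] ->
  (x = u /\ y = v) \/ (x = v /\ y = u).
Proof.
move=> xy E; have /set2P x_uv : x \in [set u; v] by rewrite -E set21.
have /set2P y_uv : y \in [set u; v] by rewrite -E set22.
by case: x_uv y_uv => ex [] ey; subst; auto; rewrite eqxx in xy.
Qed.

Lemma connected_neighbor G x y : connectedb G -> x != y -> exists k, [set x; k] \in G.
Proof.
move=> /forallP /(_ x) /forallP /(_ y) /connectP [[|k p] /= xp ->]; first by rewrite eqxx.
by case/andP: xp => xk _; exists k.
Qed.

Lemma spanning_subtree G : simple_graph G -> connectedb G ->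
  exists2 T : {set {set 'I_N}}, T \subset G & spanning_tree T.
Proof.
move=> simG conG.
have [T /minsetP [/andP [TG conT] T_min] _] :=
  minset_exists (P := [pred A : {set {set 'I_N}} | (A \subset G) && connectedb A])
    (C := G) (introT andP (conj (subxx G) conG)).
exists T => //; split; [|split] => // [e /(subsetP TG) /simG // | e eT].
apply/negP => conTe; have sTe : T :\ e \subset T by apply: subD1set.
have := T_min (T :\ e); rewrite /= conTe (subset_trans sTe TG) => /(_ isT sTe) Te.
by move: eT; rewrite -Te setD11.
Qed.

Lemma exists_spanning_tree : exists T, spanning_tree T.
Proof.
pose K := [set e : {set 'I_N} | #|e| == 2].
have simK : simple_graph K by move=> e; rewrite inE => /eqP.
have conK : connectedb K.
  apply/forallP => x; apply/forallP => y; have [-> | xy] := eqVneq x y; first exact: connect0.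
  by apply: connect1; rewrite /adj inE cards2 xy.
by have [T _ treeT] := spanning_subtree simK conK; exists T.
Qed.

Section Reattach.
Variables x0 x1 : 'I_N.
Hypothesis x01 : x0 != x1.

Definition redirect x := if x == x0 then x1 else x.

Definition reattach G :=
  [set x0; x1] |: [set redirect @: e | e : {set 'I_N} in G & #|redirect @: e| == 2].

Lemma redirect_neq x : redirect x != x0.
Proof. by rewrite /redirect; have [_ | //] := eqVneq x x0; rewrite eq_sym. Qed.

Lemma redirect_set2 x y : redirect @: [set x; y] = [set redirect x; redirect y].
Proof. by rewrite imsetU1 imset_set1. Qed.

Lemma mem_reattach G x y : [set x; y] \in G -> redirect x != redirect y ->
  [set redirect x; redirect y] \in reattach G.
Proof.
move=> xyG rxy; rewrite !inE; apply/orP; right; apply/imsetP; exists [set x; y].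
  by rewrite inE xyG redirect_set2 cards2 rxy.
by rewrite redirect_set2.
Qed.

Lemma reattachP G e : simple_graph G -> e \in reattach G ->
  e = [set x0; x1] \/
  exists x y, [set x; y] \in G /\ e = [set redirect x; redirect y].
Proof.
move=> simG; rewrite !inE => /orP [/eqP -> | /imsetP [e0]]; first by left.
rewrite inE => /andP [e0G _] ->; right.
have /eqP /cards2P [x [y [_ e0E]]] := simG _ e0G; subst e0.
by exists x, y; rewrite redirect_set2.
Qed.

Lemma reattach_simple G : simple_graph (reattach G).
Proof.
move=> e; rewrite in_setU1 => /orP [/eqP -> | /imsetP [e0]]; first by rewrite cards2 x01.
by rewrite inE => /andP [_ /eqP card2] ->.
Qed.

Lemma reattach_connected G : connectedb G -> connectedb (reattach G).
Proof.
move=> conG; apply/forallP => x; apply/forallP => y.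
have to_redirect z : connect (adj (reattach G)) z (redirect z).
  rewrite /redirect; have [-> | _] := eqVneq z x0; last exact: connect0.
  by apply: connect1; rewrite /adj setU11.
have from_redirect z : connect (adj (reattach G)) (redirect z) z.
  rewrite /redirect; have [-> | _] := eqVneq z x0; last exact: connect0.
  by apply: connect1; rewrite /adj (setUC [set x1]) setU11.
have step : subrel (adj G) (connect (adj (reattach G))).
  move=> a b abG; apply: connect_trans (to_redirect a) _.
  apply: connect_trans _ (from_redirect b).
  have [-> | rab] := eqVneq (redirect a) (redirect b); first exact: connect0.
  exact/connect1/mem_reattach.
exact: connect_sub step _ _ (forallP (forallP conG x) y).
Qed.

Lemma reattach_neighbor G v : [set x0; v] \in reattach G -> v = x1.
Proof.
rewrite in_setU1 => /orP [/eqP E | /imsetP [e _ E]].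
- have /set2P [vx0 | //] : v \in [set x0; x1] by rewrite -E set22.
  have : x1 \in [set x0; v] by rewrite E set22.
  by rewrite vx0 setUid inE => /eqP x10; move: x01; rewrite x10 eqxx.
- have : x0 \in redirect @: e by rewrite -E set21.
  by case/imsetP => z _ /eqP; rewrite eq_sym (negbTE (redirect_neq z)).
Qed.

Lemma pendant_spanning_subtree G : connectedb G ->
  exists2 T : {set {set 'I_N}}, T \subset reattach G &
    spanning_tree T /\ forall v, [set x0; v] \in T <-> v = x1.
Proof.
move=> conG.
have [T TG treeT] := spanning_subtree (@reattach_simple G) (reattach_connected conG).
have nbT v : [set x0; v] \in T -> v = x1 by move/(subsetP TG)/reattach_neighbor.
exists T => //; split => // v; split => [/nbT // | ->].
case: treeT => _ [conT _]; have [k x0k] := connected_neighbor conT x01.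
by rewrite -(nbT _ x0k).
Qed.

End Reattach.
End Graphs.

Section RhoReattach.
Variables (N : nat) (gamma : 'I_N -> R) (x0 x1 : 'I_N).
Hypotheses (gamma_gt0 : forall x, (0 < gamma x)%R) (x01 : x0 != x1).
Hypotheses (gamma_min0 : forall x, (gamma x0 <= gamma x)%R)
  (gamma_min1 : forall x : 'I_N, x != x0 -> (gamma x1 <= gamma x)%R).

Lemma rho_le_phi_redirect T a b : simple_graph T -> [set a; b] \in T ->
  (rho gamma T <= phi gamma (redirect x0 x1 a) (redirect x0 x1 b))%R.
Proof.
move=> simT abT; have ab := simple_edge_neq simT abT.
have ba : b != a by rewrite eq_sym.
have baT : [set b; a] \in T by rewrite setUC.
rewrite /redirect; have [ax0 | ax0] := eqVneq a x0; have [bx0 | bx0] := eqVneq b x0.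
- by move: ab; rewrite ax0 bx0 eqxx.
- apply: Rle_trans (rho_le_phi gamma ab abT) _; rewrite ax0.
  by apply: (phi_le gamma_gt0); [exact: gamma_min0 | exact: Rle_refl].
- apply: Rle_trans (rho_le_phi gamma ba baT) _; rewrite bx0.
  by apply: (phi_le gamma_gt0); [exact: gamma_min0 | exact: gamma_min1].
- exact: rho_le_phi.
Qed.

Lemma rho_reattach_ge T : simple_graph T -> connectedb T ->
  (rho gamma T <= rho gamma (reattach x0 x1 T))%R.
Proof.
move=> simT conT; have [k x0k] := connected_neighbor conT x01.
have kx0 : k != x0 by rewrite eq_sym (simple_edge_neq simT x0k).
have rho_le_x0k := rho_le_phi gamma (simple_edge_neq simT x0k) x0k.
apply: (rho_ge x01 (setU11 _ _)) => i j ij /(reattachP simT) [E | [a [b [abT E]]]].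
- case: (set2_eq_cases ij E) => [[-> ->] | [-> ->]]; apply: Rle_trans rho_le_x0k _.
  + by apply: (phi_le gamma_gt0); [exact: Rle_refl | exact: gamma_min1].
  + by apply: (phi_le gamma_gt0); exact: gamma_min0.
- case: (set2_eq_cases ij E) => [[-> ->] | [-> ->]]; apply: rho_le_phi_redirect => //.
  by rewrite setUC.
Qed.

End RhoReattach.

Theorem lemma1 (N : nat) (hN : (2 <= N)%N) (gamma : 'I_N -> R)
  (hpos : forall i : 'I_N, (0 < gamma i)%R)
  (hsorted : forall i j : 'I_N, (i <= j)%N -> (gamma i <= gamma j)%R) :
  exists T : {set {set 'I_N}},
    spanning_tree T /\
    (forall T' : {set {set 'I_N}}, spanning_tree T' -> (rho gamma T' <= rho gamma T)%R) /\
    (forall u v : 'I_N, nat_of_ord u = 0%N -> ([set u; v] \in T <-> nat_of_ord v = 1%N)).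
Proof.
pose o0 : 'I_N := Ordinal (ltnW hN); pose o1 : 'I_N := Ordinal hN.
have o01 : o0 != o1 by [].
have gamma_min0 x : (gamma o0 <= gamma x)%R by apply: hsorted.
have gamma_min1 x : x != o0 -> (gamma o1 <= gamma x)%R.
  move=> xo0; apply: hsorted; rewrite lt0n; apply: contra xo0 => /eqP x0.
  by apply/eqP/val_inj.
have [T [[simT [conT _]] T_max]] := exists_maximizer (rho gamma) (exists_spanning_tree N).
have [T' T'_sub [treeT' pendant]] := pendant_spanning_subtree o01 conT.
have le_rho_T_T' : (rho gamma T <= rho gamma T')%R.
  apply: Rle_trans (rho_reattach_ge hpos o01 gamma_min0 gamma_min1 simT conT) _.
  by apply: (rho_subset gamma T'_sub o01); apply/pendant.
exists T'; split => //; split => [T'' treeT'' | u v u0].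
- by apply: Rle_trans le_rho_T_T'; apply: T_max.
- have -> : u = o0 by apply: val_inj.
  split => [/pendant -> // | v1]; apply/pendant; exact: val_inj.
Qed.
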